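(* In the two-block setting, suppose Assumptions 1 and 2 hold; let $\boldsymbol{M}_1=\partial(f_1^*\circ(-B_1^* ))+c$, $\boldsymbol{M}_2=\partial(f_2^*\circ(-B_2^* ))$. Let $\{y^k,s^k\}_{k\ge1}$ be generated by Algorithm B from $y^0\in\operatorname{dom}f_1$, $x^0=\hat x^0\in\mathbb{X}$, $\sigma>0$, with limit $(y^*,s^* )$, and let $\{w^k,x^k,v^k,\eta^k\}_{k\ge1}$ be generated by Algorithm A from the same data (so $\eta^0=\hat x^0+\sigma(B_1y^0-c)$). Let $\eta^*:=\Pi_{\operatorname{Fix}(\mathbf{T}^{\rm PR}_\sigma)}(\eta^0)$ and $w^*:=\boldsymbol{J}_{\sigma\boldsymbol{M}_2}(\eta^* )$. Then for all $k\ge0$: $$4\sigma h(y^{k+1},s^{k+1})=-4\sigma\big(d_{f_1}(x^{k+1})+d_{f_2}(w^{k+1})-d_{f_1}(w^* )-d_{f_2}(w^* )\big)+\|\eta^k-v^{k+1}\|^2+2\langle\eta^k-v^{k+1},v^{k+1}\rangle,$$ $$4\sigma h(y^{k+1},s^{k+1})\le\|\eta^k-(\eta^*-w^* )\|^2-\|v^{k+1}-(\eta^*-w^* )\|^2,$$ $$h(y^{k+1},s^{k+1})\ge\langle B_1y^{k+1}+B_2s^{k+1}-c,\,-w^*\rangle.$$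
   Context: Two-block setting: $\mathbb{X},\mathbb{Y},\mathbb{Z}$ are finite-dimensional real Euclidean spaces; $f_1:\mathbb{Y}\to(-\infty,+\infty]$, $f_2:\mathbb{Z}\to(-\infty,+\infty]$ proper closed convex; $B_1:\mathbb{Y}\to\mathbb{X}$, $B_2:\mathbb{Z}\to\mathbb{X}$ linear; $c\in\mathbb{X}$. Problem (P): $\min f_1(y)+f_2(s)$ s.t. $B_1y+B_2s=c$. Dual (D): $\max_x\{-f_1^*(-B_1^*x)-f_2^*(-B_2^*x)-\langle c,x\rangle\}$. $L_\sigma(y,s;x):=f_1(y)+f_2(s)+\langle x,B_1y+B_2s-c\rangle+\frac{\sigma}{2}\|B_1y+B_2s-c\|^2$. $\Sigma_{f_1}$ (resp. $\Sigma_{f_2}$) is a self-adjoint positive semidefinite operator with $f_1(y)\ge f_1(\hat y)+\langle\hat\phi,y-\hat y\rangle+\frac12\|y-\hat y\|^2_{\Sigma_{f_1}}$ and $\langle\phi-\hat\phi,y-\hat y\rangle\ge\|y-\hat y\|^2_{\Sigma_{f_1}}$ for all $y,\hat y\in\operatorname{dom}f_1$, $\phi\in\partial f_1(y)$, $\hat\phi\in\partial f_1(\hat y)$ (same for $f_2$). Assumption 1: for $i=1,2$, $\operatorname{ri}(\operatorname{dom}f_i^* )\cap\operatorname{Range}(B_i^* )\ne\emptyset$; $\operatorname{ri}(\operatorname{dom}(f_1^*\circ(-B_1^* )))\cap\operatorname{ri}(\operatorname{dom}(f_2^*\circ(-B_2^* )))\ne\emptyset$; (P) has a solution. Assumption 2: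 $\Sigma_{f_1}+B_1^*B_1$ and $\Sigma_{f_2}+B_2^*B_2$ are positive definite. $\boldsymbol{J}_{\boldsymbol{M}}=(\boldsymbol{I}+\boldsymbol{M})^{-1}$, $\boldsymbol{R}_{\boldsymbol{M}}=2\boldsymbol{J}_{\boldsymbol{M}}-\boldsymbol{I}$, $\mathbf{T}^{\rm PR}_\sigma=\boldsymbol{R}_{\sigma\boldsymbol{M}_1}\circ\boldsymbol{R}_{\sigma\boldsymbol{M}_2}$; $\Pi$ is Euclidean projection, $\operatorname{Fix}$ the fixed-point set. $h(y,s):=f_1(y)+f_2(s)-f_1(y^* )-f_2(s^* )$; $d_{f_1}(w):=f_1^*(-B_1^*w)+\langle w,c\rangle$, $d_{f_2}(w):=f_2^*(-B_2^*w)$. Algorithm A: input $y^0,x^0,\sigma$; $\hat x^0:=x^0$, $\eta^0:=\hat x^0+\sigma(B_1y^0-c)$; for $k\ge0$: $s^{k+1}=\arg\min_s\{f_2(s)+\langle\eta^k,B_2s\rangle+\frac\sigma2\|B_2s\|^2\}$; $w^{k+1}=\eta^k+\sigma B_2s^{k+1}$; $y^{k+1}=\arg\min_y\{f_1(y)+\langle\eta^k+2\sigma B_2s^{k+1},B_1y-c\rangle+\frac\sigma2\|B_1y-c\|^2\}$; $x^{k+1}=\eta^k+\sigma(B_1y^{k+1}-c)+2\sigma B_2s^{k+1}$; $v^{k+1}=\eta^k+2\sigma(B_1y^{k+1}+B_2s^{k+1}-c)$; $\eta^{k+1}=\frac{1}{k+2}\eta^0+\frac{k+1}{k+2}v^{k+1}$.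 Algorithm B: input $y^0,x^0,\sigma$; $\hat x^0:=x^0$; for $k\ge0$: $s^{k+1}=\arg\min_s L_\sigma(y^k,s;\hat x^k)$; $x^{k+1/2}=\hat x^k+\sigma(B_1y^k+B_2s^{k+1}-c)$; $y^{k+1}=\arg\min_y L_\sigma(y,s^{k+1};x^{k+1/2})$; $x^{k+1}=x^{k+1/2}+\sigma(B_1y^{k+1}+B_2s^{k+1}-c)$; $\hat x^{k+1}=\frac{1}{k+2}\hat x^0+\frac{k+1}{k+2}x^{k+1}+\frac{\sigma}{k+2}[(B_1y^0-c)-(B_1y^{k+1}-c)]$. (Algorithms A and B produce the same $\{s^k,y^k,x^k\}$.) *)

(* R : realType, Euclidean spaces X,Y,Z modelled as column
   vectors 'cV[R]_n with the standard inner product; linear maps as matrices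
   (adjoint = transpose); extended-valued functions take values in \bar R. *)
From HB Require Import structures.
From mathcomp Require Import all_boot all_order all_algebra.
Import Order.TTheory GRing.Theory Num.Theory.
From mathcomp Require Import boolp classical_sets reals constructive_ereal ereal.
Set Implicit Arguments. Unset Strict Implicit. Unset Printing Implicit Defensive.
Local Open Scope ring_scope.
Local Open Scope classical_set_scope.

Definition ip {R : realType} {n : nat} (u v : 'cV[R]_n) : R :=
  \sum_(i < n) u i 0 * v i 0.
Definition sqnorm {R : realType} {n : nat} (u : 'cV[R]_n) : R := ip u u.
Definition enorm {R : realType} {n : nat} (u : 'cV[R]_n) : R :=
  Num.sqrt (sqnorm u).

Definition dom {R : realType} {n : nat} (f : 'cV[R]_n -> \bar R) :
  set 'cV[R]_n := [set x | (f x < +oo)%E].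

Definition properf {R : realType} {n : nat} (f : 'cV[R]_n -> \bar R) :=
  (forall x, (-oo < f x)%E) /\ exists x, (f x < +oo)%E.
Definition convexf {R : realType} {n : nat} (f : 'cV[R]_n -> \bar R) :=
  forall (x y : 'cV[R]_n) (t : R), 0 < t < 1 ->
    (f (t *: x + (1 - t) *: y)%R <= t%:E * f x + (1 - t)%:E * f y)%E.
(* closed = lower semicontinuous *)
Definition lscf {R : realType} {n : nat} (f : 'cV[R]_n -> \bar R) :=
  forall x (a : R), (a%:E < f x)%E ->
    exists2 d : R, 0 < d & forall z, enorm (z - x) < d -> (a%:E < f z)%E.
Definition proper_closed_convex {R : realType} {n : nat}
  (f : 'cV[R]_n -> \bar R) := properf f /\ convexf f /\ lscf f.

Definition fconj {R : realType} {n : nat} (f : 'cV[R]_n -> \bar R)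
  (u : 'cV[R]_n) : \bar R :=
  ereal_sup [set ((ip u y)%:E - f y)%E | y in [set: 'cV[R]_n]].

Definition subdiff {R : realType} {n : nat} (f : 'cV[R]_n -> \bar R)
  (x : 'cV[R]_n) : set 'cV[R]_n :=
  [set phi | f x \is a fin_num /\
             forall z, (f x + (ip phi (z - x))%:E <= f z)%E].

Definition affine_hull {R : realType} {n : nat} (C : set 'cV[R]_n) :
  set 'cV[R]_n :=
  [set z | exists m (p : 'I_m -> 'cV[R]_n) (a : 'I_m -> R),
     (forall i, C (p i)) /\ \sum_(i < m) a i = 1 /\
     z = \sum_(i < m) a i *: p i].
Definition ri {R : realType} {n : nat} (C : set 'cV[R]_n) : set 'cV[R]_n :=
  [set x | C x /\ exists2 e : R, 0 < e &
     forall z, affine_hull C z -> enorm (z - x) < e -> C z].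

Definition is_proj {R : realType} {n : nat} (C : set 'cV[R]_n)
  (x p : 'cV[R]_n) :=
  C p /\ forall z, C z -> sqnorm (x - p) <= sqnorm (x - z).

(* w = J_{sigma M}(eta) = (I + sigma M)^{-1}(eta), i.e. eta in w + sigma M(w);
   M is a set-valued operator *)
Definition is_resolvent {R : realType} {n : nat}
  (M : 'cV[R]_n -> set 'cV[R]_n) (sigma : R) (eta w : 'cV[R]_n) :=
  exists2 u, M w u & eta = w + sigma *: u.

(* eta in Fix(R_{sigma M1} o R_{sigma M2}), with R_M = 2 J_M - I *)
Definition fix_PR {R : realType} {n : nat}
  (M1 M2 : 'cV[R]_n -> set 'cV[R]_n) (sigma : R) (eta : 'cV[R]_n) :=
  exists w2 w1, is_resolvent M2 sigma eta w2 /\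
     is_resolvent M1 sigma (2%:R *: w2 - eta) w1 /\
     2%:R *: w1 - (2%:R *: w2 - eta) = eta.

Definition is_argmin {T} {R : realType} (F : T -> \bar R) (x : T) :=
  forall z, (F x <= F z)%E.

Definition cvg_vec {R : realType} {n : nat} (u : nat -> 'cV[R]_n)
  (l : 'cV[R]_n) :=
  forall e : R, 0 < e -> exists N, forall k, (N <= k)%N -> enorm (u k - l) < e.

Definition pos_def {R : realType} {n : nat} (A : 'M[R]_n) :=
  forall y : 'cV[R]_n, y != 0 -> 0 < ip y (A *m y).

Definition is_sigma_mod {R : realType} {n : nat} (f : 'cV[R]_n -> \bar R)
  (Sig : 'M[R]_n) :=
  Sig^T = Sig /\ (forall y, 0 <= ip y (Sig *m y)) /\
  (forall y yh phih, dom f y -> dom f yh -> subdiff f yh phih ->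
     (f yh + (ip phih (y - yh))%:E
        + (2%:R^-1 * ip (y - yh) (Sig *m (y - yh)))%:E <= f y)%E) /\
  (forall y yh phi phih, dom f y -> dom f yh -> subdiff f y phi ->
     subdiff f yh phih ->
     ip (y - yh) (Sig *m (y - yh)) <= ip (phi - phih) (y - yh)).

Section TwoBlock.
Context {R : realType} {nx ny nz : nat}.
Definition is_solution_P (f1 : 'cV[R]_ny -> \bar R) (f2 : 'cV[R]_nz -> \bar R) (B1 : 'M[R]_(nx, ny)) (B2 : 'M[R]_(nx, nz)) (c : 'cV[R]_nx)(y : 'cV[R]_ny) (s : 'cV[R]_nz) :=
  B1 *m y + B2 *m s = c /\ (f1 y + f2 s < +oo)%E /\
  forall y' s', B1 *m y' + B2 *m s' = c -> (f1 y + f2 s <= f1 y' + f2 s')%E.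

Definition conjB1 (f1 : 'cV[R]_ny -> \bar R) (B1 : 'M[R]_(nx, ny))(w : 'cV[R]_nx) := fconj f1 (- (B1^T *m w)).
Definition conjB2 (f2 : 'cV[R]_nz -> \bar R) (B2 : 'M[R]_(nx, nz))(w : 'cV[R]_nx) := fconj f2 (- (B2^T *m w)).

Definition Assumption1 (f1 : 'cV[R]_ny -> \bar R) (f2 : 'cV[R]_nz -> \bar R) (B1 : 'M[R]_(nx, ny)) (B2 : 'M[R]_(nx, nz)) (c : 'cV[R]_nx):=
  (ri (dom (fconj f1)) `&` [set B1^T *m x | x in [set: 'cV[R]_nx]] <> set0) /\
  (ri (dom (fconj f2)) `&` [set B2^T *m x | x in [set: 'cV[R]_nx]] <> set0) /\
  (ri (dom (conjB1 f1 B1)) `&` ri (dom (conjB2 f2 B2)) <> set0) /\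
  (exists y s, is_solution_P f1 f2 B1 B2 c y s).

Definition Assumption2 (B1 : 'M[R]_(nx, ny)) (B2 : 'M[R]_(nx, nz))(Sig1 : 'M[R]_ny) (Sig2 : 'M[R]_nz) :=
  pos_def (Sig1 + B1^T *m B1) /\ pos_def (Sig2 + B2^T *m B2).

Definition M1op (f1 : 'cV[R]_ny -> \bar R) (B1 : 'M[R]_(nx, ny)) (c : 'cV[R]_nx)(w : 'cV[R]_nx) : set 'cV[R]_nx :=
  [set u + c | u in subdiff (conjB1 f1 B1) w].
Definition M2op (f2 : 'cV[R]_nz -> \bar R) (B2 : 'M[R]_(nx, nz))(w : 'cV[R]_nx) : set 'cV[R]_nx :=
  subdiff (conjB2 f2 B2) w.

Definition d_f1 (f1 : 'cV[R]_ny -> \bar R) (B1 : 'M[R]_(nx, ny)) (c : 'cV[R]_nx)(w : 'cV[R]_nx) : \bar R :=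
  (conjB1 f1 B1 w + (ip w c)%:E)%E.
Definition d_f2 (f2 : 'cV[R]_nz -> \bar R) (B2 : 'M[R]_(nx, nz))(w : 'cV[R]_nx) : \bar R := conjB2 f2 B2 w.

Definition Lsig (f1 : 'cV[R]_ny -> \bar R) (f2 : 'cV[R]_nz -> \bar R) (B1 : 'M[R]_(nx, ny)) (B2 : 'M[R]_(nx, nz)) (c : 'cV[R]_nx)(sigma : R) (y : 'cV[R]_ny) (s : 'cV[R]_nz)
  (x : 'cV[R]_nx) : \bar R :=
  let r := B1 *m y + B2 *m s - c in
  (f1 y + f2 s + (ip x r + sigma / 2%:R * sqnorm r)%:E)%E.

(* Algorithm B, with xh k = \hat x^k and xhalf k = x^{k+1/2} *)
Definition AlgorithmB (f1 : 'cV[R]_ny -> \bar R) (f2 : 'cV[R]_nz -> \bar R) (B1 : 'M[R]_(nx, ny)) (B2 : 'M[R]_(nx, nz)) (c : 'cV[R]_nx)(y0 : 'cV[R]_ny) (x0 : 'cV[R]_nx)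
  (sigma : R) (y : nat -> 'cV[R]_ny) (s : nat -> 'cV[R]_nz)
  (x xh xhalf : nat -> 'cV[R]_nx) :=
  y 0%N = y0 /\ x 0%N = x0 /\ xh 0%N = x0 /\
  forall k : nat,
    is_argmin (fun s' => Lsig f1 f2 B1 B2 c sigma (y k) s' (xh k)) (s k.+1) /\
    xhalf k = xh k + sigma *: (B1 *m y k + B2 *m s k.+1 - c) /\
    is_argmin (fun y' => Lsig f1 f2 B1 B2 c sigma y' (s k.+1) (xhalf k))
      (y k.+1) /\
    x k.+1 = xhalf k + sigma *: (B1 *m y k.+1 + B2 *m s k.+1 - c) /\
    xh k.+1 = (k.+2%:R)^-1 *: xh 0%N + (k.+1%:R / k.+2%:R) *: x k.+1
              + (sigma / k.+2%:R) *: ((B1 *m y0 - c) - (B1 *m y k.+1 - c)).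

Definition AlgorithmA (f1 : 'cV[R]_ny -> \bar R) (f2 : 'cV[R]_nz -> \bar R) (B1 : 'M[R]_(nx, ny)) (B2 : 'M[R]_(nx, nz)) (c : 'cV[R]_nx)(y0 : 'cV[R]_ny) (x0 : 'cV[R]_nx)
  (sigma : R) (s : nat -> 'cV[R]_nz) (y : nat -> 'cV[R]_ny)
  (w x v eta : nat -> 'cV[R]_nx) :=
  y 0%N = y0 /\ x 0%N = x0 /\
  eta 0%N = x0 + sigma *: (B1 *m y0 - c) /\
  forall k : nat,
    is_argmin (fun s' => (f2 s' + (ip (eta k) (B2 *m s')
                    + sigma / 2%:R * sqnorm (B2 *m s'))%:E)%E) (s k.+1) /\
    w k.+1 = eta k + sigma *: (B2 *m s k.+1) /\
    is_argmin (fun y' => (f1 y' +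
        (ip (eta k + (2%:R * sigma) *: (B2 *m s k.+1)) (B1 *m y' - c)
         + sigma / 2%:R * sqnorm (B1 *m y' - c))%:E)%E) (y k.+1) /\
    x k.+1 = eta k + sigma *: (B1 *m y k.+1 - c)
             + (2%:R * sigma) *: (B2 *m s k.+1) /\
    v k.+1 = eta k + (2%:R * sigma) *: (B1 *m y k.+1 + B2 *m s k.+1 - c) /\
    eta k.+1 = (k.+2%:R)^-1 *: eta 0%N + (k.+1%:R / k.+2%:R) *: v k.+1.

Definition hfun (f1 : 'cV[R]_ny -> \bar R) (f2 : 'cV[R]_nz -> \bar R)(ystar : 'cV[R]_ny) (sstar : 'cV[R]_nz)
  (y : 'cV[R]_ny) (s : 'cV[R]_nz) : \bar R :=
  (f1 y + f2 s - f1 ystar - f2 sstar)%E.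

End TwoBlock.

(* Proof outline.
   1. Algorithms A and B produce the same primal iterates, and the optimality
      conditions of their subproblems read -B2^T w^{k+1} in df2(s^{k+1}) and
      -B1^T x^{k+1} in df1(y^{k+1}) (section Synchronisation).
   2. The fixed point etastar, through wstar = J_{sigma M2}(etastar), yields
      dual subgradients u1, u2 at wstar with u1 + u2 + c = 0 and
      etastar = wstar + sigma u2 (fix_PR_certificate). Monotonicity of subdifferentials makes every Peaceman-Rachford step
      nonexpansive towards etastar, so the anchored averages stay bounded.
   4. The subgradient inequalities at wstar bound f1(y^{k+1}) + f2(s^{k+1})
      from above, Fenchel-Young from below.
   5. Boundedness forces the limit (ystar, sstar) to be feasible; lower
      semicontinuity then gives strong duality at (ystar, sstar, wstar).
   6. The three estimates follow from 4 and 5 by algebraic identities between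
      the iterates. *)

From HB Require Import structures.
From mathcomp Require Import all_boot all_order all_algebra.
Import Order.TTheory GRing.Theory Num.Theory.
From mathcomp Require Import boolp classical_sets reals constructive_ereal ereal.
From mathcomp Require Import ring lra.
Set Implicit Arguments. Unset Strict Implicit. Unset Printing Implicit Defensive.
Local Open Scope ring_scope.
Local Open Scope classical_set_scope.

Section InnerProduct.
Context {R : realType} {n : nat}.
Implicit Types p q r u v w : 'cV[R]_n.

Lemma ipC u v : ip u v = ip v u.
Proof. by apply: eq_bigr => i _; rewrite mulrC. Qed.

Lemma ipDl u v w : ip (u + v) w = ip u w + ip v w.
Proof. by rewrite /ip -big_split; apply: eq_bigr => i _; rewrite mxE mulrDl. Qed.

Lemma ipZl a u v : ip (a *: u) v = a * ip u v.
Proof. by rewrite /ip mulr_sumr; apply: eq_bigr => i _; rewrite mxE mulrA. Qed.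

Lemma ipNl u v : ip (- u) v = - ip u v.
Proof. by rewrite -scaleN1r ipZl mulN1r. Qed.

Lemma ipBl u v w : ip (u - v) w = ip u w - ip v w.
Proof. by rewrite ipDl ipNl. Qed.

Lemma ipDr u v w : ip w (u + v) = ip w u + ip w v.
Proof. by rewrite ipC ipDl !(ipC w). Qed.

Lemma ipZr a u v : ip v (a *: u) = a * ip v u.
Proof. by rewrite ipC ipZl ipC. Qed.

Lemma ipNr u v : ip v (- u) = - ip v u.
Proof. by rewrite ipC ipNl ipC. Qed.

Lemma ipBr u v w : ip w (u - v) = ip w u - ip w v.
Proof. by rewrite ipDr ipNr. Qed.

Lemma ip0l u : ip 0 u = 0.
Proof. by rewrite /ip big1 // => i _; rewrite mxE mul0r. Qed.

Lemma ip0r u : ip u 0 = 0.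
Proof. by rewrite ipC ip0l. Qed.

Lemma sqnorm_ge0 u : 0 <= sqnorm u.
Proof. by rewrite /sqnorm /ip sumr_ge0 // => i _; rewrite -expr2 sqr_ge0. Qed.

Lemma sqnorm_eq0 u : sqnorm u = 0 -> u = 0.
Proof.
move=> u0; apply/matrixP => i j; rewrite (ord1 j) mxE.
have sq0 : \sum_(k < n) u k 0 ^+ 2 = 0.
  by rewrite -[RHS]u0 /sqnorm /ip; apply: eq_bigr => k _; rewrite expr2.
have /eqP : u i 0 ^+ 2 = 0 by apply: (psumr_eq0P _ sq0) => // k _; exact: sqr_ge0.
by rewrite sqrf_eq0 => /eqP.
Qed.

Lemma sqnormD u v : sqnorm (u + v) = sqnorm u + 2 * ip u v + sqnorm v.
Proof. rewrite /sqnorm ipDl !ipDr (ipC v u); lra. Qed.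

Lemma sqnormZ a u : sqnorm (a *: u) = a ^+ 2 * sqnorm u.
Proof. by rewrite /sqnorm ipZl ipZr mulrA expr2. Qed.

Lemma sqnormN u : sqnorm (- u) = sqnorm u.
Proof. by rewrite /sqnorm ipNl ipNr opprK. Qed.

Lemma sqnormB u v : sqnorm (u - v) = sqnorm u - 2 * ip u v + sqnorm v.
Proof. rewrite sqnormD sqnormN ipNr; lra. Qed.

Lemma ip2_le u v : 2 * ip u v <= sqnorm u + sqnorm v.
Proof. have := sqnorm_ge0 (u - v); rewrite sqnormB; lra. Qed.

Lemma ip2_ge u v : - (sqnorm u + sqnorm v) <= 2 * ip u v.
Proof. have := sqnorm_ge0 (u + v); rewrite sqnormD; lra. Qed.

Lemma sqnormD2 u v : sqnorm (u + v) <= 2 * sqnorm u + 2 * sqnorm v.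
Proof. rewrite sqnormD; have := ip2_le u v; lra. Qed.

Lemma cauchy_schwarz u v : ip u v ^+ 2 <= sqnorm u * sqnorm v.
Proof.
have [u0|u_neq0] := eqVneq (sqnorm u) 0.
  by rewrite u0 (sqnorm_eq0 u0) ip0l expr0n /= mul0r.
have u_gt0 : 0 < sqnorm u by rewrite lt_def u_neq0 sqnorm_ge0.
have := sqnorm_ge0 (sqnorm u *: v - ip u v *: u).
rewrite sqnormB !sqnormZ ipZl ipZr (ipC v u) -/(sqnorm u) => H.
have : 0 <= sqnorm u * (sqnorm u * sqnorm v - ip u v ^+ 2) by nra.
by rewrite pmulr_rge0 // subr_ge0.
Qed.

Lemma sqnorm_convex (l : R) u v : 0 <= l <= 1 ->
  sqnorm (l *: u + (1 - l) *: v) <= l * sqnorm u + (1 - l) * sqnorm v.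
Proof.
move=> /andP[l0 l1]; rewrite sqnormD !sqnormZ ipZl ipZr.
have h : 0 <= l * (1 - l) by nra.
have := ip2_le u v; have := sqnorm_ge0 u; have := sqnorm_ge0 v.
rewrite !expr2; nra.
Qed.

Lemma ip_ge_half p q : sqnorm (p - q) <= sqnorm q / 4 -> sqnorm q / 2 <= ip p q.
Proof.
move=> pq; have := ip2_ge (2 *: (p - q)) q.
rewrite sqnormZ ipZl ipBl -/(sqnorm q); lra.
Qed.

Lemma ip_abs_le p q K L : sqnorm p <= K -> sqnorm q <= L -> `|ip p q| <= K + L.
Proof.
move=> pK qL; have := ip2_le p q; have := ip2_ge p q.
rewrite ler_norml; lra.
Qed.

Lemma ip_lt_small p r (K d : R) : 0 <= K -> 0 < d -> sqnorm p <= K ->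
  sqnorm r < d * d / (K + 1) -> ip p r < d.
Proof.
move=> K0 d0 pK rd.
have r_small : sqnorm r * (K + 1) < d * d by rewrite -ltr_pdivlMr //; lra.
have cs := cauchy_schwarz p r; rewrite expr2 in cs.
have := sqnorm_ge0 r; have := sqnorm_ge0 p; nra.
Qed.
End InnerProduct.

Lemma ip_mul {R : realType} {m n : nat} (A : 'M[R]_(m, n)) (u : 'cV[R]_n)
  (v : 'cV[R]_m) : ip (A *m u) v = ip u (A^T *m v).
Proof.
rewrite /ip; under eq_bigr do rewrite mxE big_distrl /=.
rewrite exchange_big /=; apply: eq_bigr => j _.
rewrite mxE big_distrr /=; apply: eq_bigr => i _; rewrite mxE; ring.
Qed.

Definition frob {R : realType} {m n : nat} (A : 'M[R]_(m, n)) : R :=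
  \sum_(i < m) sqnorm ((row i A)^T).

Section Limits.
Context {R : realType}.

Lemma frob_ge0 {m n} (A : 'M[R]_(m, n)) : 0 <= frob A.
Proof. by apply: sumr_ge0 => i _; exact: sqnorm_ge0. Qed.

Lemma sqnorm_mul_le {m n} (A : 'M[R]_(m, n)) (u : 'cV[R]_n) :
  sqnorm (A *m u) <= frob A * sqnorm u.
Proof.
rewrite /sqnorm {1}/ip /frob big_distrl /=; apply: ler_sum => i _.
have -> : (A *m u) i 0 = ip ((row i A)^T) u.
  by rewrite mxE /ip; apply: eq_bigr => j _; rewrite !mxE.
by rewrite -expr2 cauchy_schwarz.
Qed.

Lemma cvg_vec_sqnorm {n} (u : nat -> 'cV[R]_n) l : cvg_vec u l ->
  forall d : R, 0 < d -> exists N, forall k, (N <= k)%N -> sqnorm (u k - l) < d.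
Proof.
move=> ul d d0; have [N HN] := ul (Num.sqrt d) (ltac:(by rewrite sqrtr_gt0)).
by exists N => k /HN; rewrite /enorm ltr_sqrt.
Qed.

Lemma cvg_vec_mul {m n} (A : 'M[R]_(m, n)) (u : nat -> 'cV[R]_n) l :
  cvg_vec u l -> forall d : R, 0 < d ->
  exists N, forall k, (N <= k)%N -> sqnorm (A *m (u k - l)) < d.
Proof.
move=> ul d d0; have A0 := frob_ge0 A.
have A1 : 0 < frob A + 1 by lra.
have [N HN] := cvg_vec_sqnorm ul (divr_gt0 d0 A1).
exists N => k /HN; rewrite ltr_pdivlMr // => uk.
have := sqnorm_mul_le A (u k - l); have := sqnorm_ge0 (u k - l); nra.
Qed.

Lemma ge0_of_lower_bounds (X K : R) : 0 <= K ->
  (forall t, 0 < t < 1 -> - (t * K) <= X) -> 0 <= X.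
Proof.
move=> K0 H; rewrite leNgt; apply/negP => X0.
have KX : 0 < K - X by lra.
pose t := - X / (2 * (K - X)).
have t0 : 0 < t by rewrite /t divr_gt0 // ?mulr_gt0; lra.
have tK : t * (2 * (K - X)) = - X by rewrite /t mulfVK //; apply/lt0r_neq0; lra.
have t1 : t < 1.
  have : t * (2 * (K - X)) < 1 * (2 * (K - X)) by rewrite tK; lra.
  by rewrite ltr_pM2r //; lra.
have := H t; rewrite t0 t1 => /(_ isT); nra.
Qed.

Lemma no_linear_escape (D : nat -> R) (b g : R) (N : nat) : b < g ->
  (forall k, `|D k| <= k.+1%:R * b) ->
  (forall k, (N <= k)%N -> D k + g <= D k.+1) -> False.
Proof.
move=> bg Db grow.
have b0 : 0 <= b by have := Db 0%N; rewrite mul1r; apply: le_trans.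
have iter m : D N + m%:R * g <= D (N + m)%N.
  elim: m => [|m IHm]; first by rewrite mul0r addr0 addn0.
  rewrite addnS -natr1 mulrDl mul1r; apply: le_trans (grow _ (leq_addr _ _)).
  lra.
have A0 : 0 <= 2 * N.+1%:R * b / (g - b) by rewrite divr_ge0 ?mulr_ge0 //; lra.
have Hm := archi_boundP A0; set m := Num.Def.archi_bound _ in Hm.
rewrite ltr_pdivrMr in Hm; last by lra.
have := iter m; move: (Db N) (Db (N + m)%N); rewrite -addSn natrD !ler_norml.
nra.
Qed.

Lemma no_quadratic_escape (D : nat -> R) (a b : R) (N : nat) : 0 < a ->
  (forall k, `|D k| <= k.+1%:R * b) ->
  (forall k, (N <= k)%N -> D k + a * k.+1%:R - b <= D k.+1) -> False.
Proof.
move=> a0 Db grow.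
have b0 : 0 <= b by have := Db 0%N; rewrite mul1r; apply: le_trans.
have A0 : 0 <= (3 * b + 1) / a by rewrite divr_ge0 //; lra.
have HN2 := archi_boundP A0; set N2 := Num.Def.archi_bound _ in HN2.
rewrite ltr_pdivrMr // in HN2.
apply: (@no_linear_escape D b (2 * b + 1) (maxn N N2)) => //; first by lra.
move=> k; rewrite geq_max => /andP[Nk N2k]; apply: le_trans (grow k Nk).
have : (N2%:R : R) <= k.+1%:R by rewrite ler_nat leqW.
nra.
Qed.
End Limits.

Lemma lsc_sum_limit {R : realType} {n m : nat} (f1 : 'cV[R]_n -> \bar R)
  (f2 : 'cV[R]_m -> \bar R) (y : nat -> 'cV[R]_n) (s : nat -> 'cV[R]_m) ys ss
  (a : R) : lscf f1 -> lscf f2 -> (forall z, (-oo < f1 z)%E) ->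
  (forall z, (-oo < f2 z)%E) -> cvg_vec y ys -> cvg_vec s ss ->
  (forall d : R, 0 < d -> exists N, forall k, (N <= k)%N ->
     (f1 (y k) + f2 (s k) <= (a + d)%:E)%E) ->
  (f1 ys + f2 ss <= a%:E)%E.
Proof.
move=> lsc1 lsc2 fin1 fin2 yl sl bound; rewrite leNgt; apply/negP => gt.
have [a1 [a2 [lt1 lt2 lt12]]] : exists a1 a2 : R,
    [/\ (a1%:E < f1 ys)%E, (a2%:E < f2 ss)%E & a < a1 + a2].
  move: gt (fin1 ys) (fin2 ss).
  case: (f1 ys) => [p||]; case: (f2 ss) => [q||] //= gt _ _.
  - exists (p - (p + q - a) / 3), (q - (p + q - a) / 3).
    by move: gt; rewrite -EFinD !lte_fin => gt; split; lra.
  - by exists (p - 1), (a - p + 2); split; rewrite ?lte_fin ?ltry //; lra.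
  - by exists (a - q + 2), (q - 1); split; rewrite ?lte_fin ?ltry //; lra.
  - by exists a, 1; split; rewrite ?ltry //; lra.
have [d1 d10 near1] := lsc1 _ _ lt1; have [d2 d20 near2] := lsc2 _ _ lt2.
have [N1 HN1] := yl _ d10; have [N2 HN2] := sl _ d20.
have [N3 HN3] := bound (a1 + a2 - a) (ltac:(lra)).
pose k := maxn N1 (maxn N2 N3).
have := HN3 k (leq_trans (leq_maxr _ _) (leq_maxr _ _)).
have := lteD (near1 _ (HN1 k (leq_maxl _ _)))
  (near2 _ (HN2 k (leq_trans (leq_maxl _ _) (leq_maxr _ _)))).
rewrite -EFinD => lt ge; have := lt_le_trans lt ge; rewrite lte_fin; lra.
Qed.

(* The objective minimised in every subproblem of both algorithms:
   f z + <p, M z + q> + sig/2 |M z + q|^2. *)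
Definition prox_obj {R : realType} {m k : nat} (f : 'cV[R]_m -> \bar R)
  (M : 'M[R]_(k, m)) (p q : 'cV[R]_k) (sig : R) (z : 'cV[R]_m) : \bar R :=
  (f z + (ip p (M *m z + q) + sig / 2 * sqnorm (M *m z + q))%:E)%E.

Section ConvexAnalysis.
Context {R : realType}.
Local Open Scope ereal_scope.

Lemma fconj_lb {n} (f : 'cV[R]_n -> \bar R) phi z :
  (ip phi z)%:E - f z <= fconj f phi.
Proof. by apply: ereal_sup_ubound; exists z. Qed.

Lemma fconj_subdiff {n} (f : 'cV[R]_n -> \bar R) y phi :
  subdiff f y phi -> fconj f phi = (ip phi y)%:E - f y.
Proof.
move=> [/EFin_fin_numP[F eF] sub]; apply/eqP; rewrite eq_le fconj_lb andbT.
apply: ge_ereal_sup => _ [z _ <-]; move: (sub z); rewrite eF.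
case: (f z) => [Fz||] /=.
- by rewrite -EFinD -!EFinB !lee_fin ipBr; lra.
- by rewrite addeNy leNye.
- by rewrite leeNy_eq.
Qed.

Lemma subdiff_mono {n} (g : 'cV[R]_n -> \bar R) w w' u u' :
  subdiff g w u -> subdiff g w' u' -> (0 <= ip (u - u') (w - w'))%R.
Proof.
move=> [/EFin_fin_numP[a ea] sub] [/EFin_fin_numP[b eb] sub'].
move: (sub w') (sub' w); rewrite ea eb -!EFinD !lee_fin ipBl !ipBr.
rewrite (ipC u' w') (ipC u w') (ipC u w) (ipC u' w); lra.
Qed.

Lemma resolvent_uniq {n} (g : 'cV[R]_n -> \bar R) (sig : R) eta w w' :
  (0 < sig)%R -> is_resolvent (subdiff g) sig eta w ->
  is_resolvent (subdiff g) sig eta w' -> w = w'.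
Proof.
move=> sig0 [u gu ew] [u' gu' ew'].
have dw : (w - w' = sig *: (u' - u))%R.
  by apply/matrixP => i j; move/matrixP: ew' => /(_ i j); rewrite ew !mxE; lra.
have := subdiff_mono gu gu'; rewrite dw ipZr -[(u' - u)%R]opprB ipNr -/(sqnorm _).
rewrite pmulr_rge0 // oppr_ge0 => uu.
have /sqnorm_eq0/eqP : sqnorm (u - u') = 0%R by apply/eqP; rewrite eq_le uu sqnorm_ge0.
rewrite subr_eq0 => /eqP uu'; apply/eqP; rewrite -subr_eq0.
by rewrite dw uu' subrr scaler0.
Qed.

Lemma reflection_nonexpansive {n} (sig : R) (w w' u u' : 'cV[R]_n) :
  (0 < sig)%R -> (0 <= ip (u - u') (w - w'))%R ->
  (sqnorm ((w - sig *: u) - (w' - sig *: u')) <=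
   sqnorm ((w + sig *: u) - (w' + sig *: u')))%R.
Proof.
move=> sig0 mono.
have -> : ((w - sig *: u) - (w' - sig *: u') = (w - w') - sig *: (u - u'))%R.
  by apply/matrixP => i j; rewrite !mxE; ring.
have -> : ((w + sig *: u) - (w' + sig *: u') = (w - w') + sig *: (u - u'))%R.
  by apply/matrixP => i j; rewrite !mxE; ring.
rewrite (sqnormB (w - w')) (sqnormD (w - w')) ipZr (ipC (w - w')); nra.
Qed.

(* Proof: compare y with y + t (z - y) and let t -> 0. *)
Lemma subdiff_of_min_quadratic {m k} (f : 'cV[R]_m -> \bar R)
  (M : 'M[R]_(k, m)) (p q : 'cV[R]_k) (kap : R) y :
  convexf f -> (forall x, -oo < f x) -> f y \is a fin_num -> (0 <= kap)%R ->
  (forall z, f y + (ip p (M *m y + q) + kap * sqnorm (M *m y + q))%:E <=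
             f z + (ip p (M *m z + q) + kap * sqnorm (M *m z + q))%:E) ->
  subdiff f y (- (M^T *m (p + (2 * kap) *: (M *m y + q))))%R.
Proof.
move=> cvx hinf /EFin_fin_numP[Fy eFy] k0 ymin; split; first by rewrite eFy.
move=> z; rewrite eFy; case ez: (f z) => [Fz | | ]; last 2 first.
- by rewrite leey.
- by have := hinf z; rewrite ez.
rewrite -EFinD lee_fin ipNl ip_mul trmxK ipDl ipZl.
set e := (M *m y + q)%R; set h := (M *m (z - y))%R.
suff : (0 <= Fz - Fy + (ip p h + 2 * kap * ip e h))%R by lra.
apply: (@ge0_of_lower_bounds _ _ (kap * sqnorm h)).
  by rewrite mulr_ge0 // sqnorm_ge0.
move=> t /andP[t0 t1]; set zt := (t *: z + (1 - t) *: y)%R.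
have := cvx z y t; rewrite t0 t1 ez eFy -!EFinM -EFinD => /(_ isT) czt.
have [Ft eFt] : exists Ft, f zt = Ft%:E.
  by move: czt (hinf zt); case: (f zt) => [r||] //; exists r.
rewrite eFt lee_fin in czt.
have Mzt : (M *m zt + q = e + t *: h)%R.
  rewrite /zt /e /h mulmxDr mulmxBr -!scalemxAr.
  by apply/matrixP => i j; rewrite !mxE; ring.
have := ymin zt; rewrite eFy eFt -!EFinD lee_fin Mzt -/e.
rewrite (ipDr e (t *: h)) (sqnormD e) sqnormZ !ipZr => yzt.
have := sqnorm_ge0 h => h0.
have : (0 <= t * (Fz - Fy + (ip p h + 2 * kap * ip e h) + t * (kap * sqnorm h)))%R.
  by nra.
by rewrite pmulr_rge0 //; lra.
Qed.

Lemma prox_optimality {m k} (f : 'cV[R]_m -> \bar R) (M : 'M[R]_(k, m))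
  (p q : 'cV[R]_k) (sig : R) y :
  properf f -> convexf f -> (0 < sig)%R -> is_argmin (prox_obj f M p q sig) y ->
  subdiff f y (- (M^T *m (p + sig *: (M *m y + q))))%R.
Proof.
move=> [hinf [z0 fz0]] cvx sig0 ymin.
have fy : f y \is a fin_num.
  rewrite fin_numE -ltNye hinf /=; move: (ymin z0); rewrite /prox_obj.
  by case: (f y) => //; case: (f z0) fz0.
have half : (2 * (sig / 2) = sig)%R by rewrite mulrC divfK ?pnatr_eq0.
rewrite -[in X in subdiff _ _ X]half; apply: subdiff_of_min_quadratic => //.
by rewrite divr_ge0 // ltW.
Qed.

Lemma argmin_drop_const {n} (F : 'cV[R]_n -> \bar R) (C : \bar R) x :
  C \is a fin_num -> is_argmin (fun z => C + F z) x -> is_argmin F x.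
Proof. by move=> Cf xmin z; have := xmin z; rewrite leeD2lE. Qed.

Lemma subdiff_conj_comp {m k} (f : 'cV[R]_m -> \bar R) (B : 'M[R]_(k, m)) w s :
  subdiff f s (- (B^T *m w))%R ->
  subdiff (fun u => fconj f (- (B^T *m u))%R) w (- (B *m s))%R.
Proof.
move=> fs; have E := fconj_subdiff fs; have [/EFin_fin_numP[F eF] _] := fs.
split; first by rewrite E eF -EFinB.
move=> z; rewrite E eF -EFinB -EFinD; apply: le_trans (fconj_lb _ _ s).
rewrite eF -EFinB lee_fin !ipNl (ip_mul B s) mulmxBr ipBr !(ipC s); lra.
Qed.

Lemma subdiff_inclusion_uniq {m k} (f : 'cV[R]_m -> \bar R) (Sig : 'M[R]_m)
  (B : 'M[R]_(k, m)) (sig : R) (p q : 'cV[R]_k) s1 s2 :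
  is_sigma_mod f Sig -> pos_def (Sig + B^T *m B) -> (0 < sig)%R ->
  subdiff f s1 (- (B^T *m (p + sig *: (B *m s1 + q))))%R ->
  subdiff f s2 (- (B^T *m (p + sig *: (B *m s2 + q))))%R -> s1 = s2.
Proof.
move=> [_ [Spsd [_ Smono]]] pd sig0 g1 g2.
have dom_of (s : 'cV[R]_m) phi : subdiff f s phi -> dom f s.
  by case=> /EFin_fin_numP[r e] _; rewrite /dom /= e ltry.
have := Smono _ _ _ _ (dom_of _ _ g1) (dom_of _ _ g2) g1 g2.
rewrite (ipBl (- _)) !ipNl !ip_mul !trmxK.
set d := (s1 - s2)%R; rewrite [B *m d]mulmxBr.
set Bd := (B *m s1 - B *m s2)%R.
rewrite !(ipDl p) !ipZl !(ipDl (B *m _)).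
have -> : (ip (B *m s1) Bd = sqnorm Bd + ip (B *m s2) Bd)%R.
  by rewrite /sqnorm /Bd ipBl; lra.
have := sqnorm_ge0 Bd; have := Spsd d => h1 h2 h3.
have e1 : ip d (Sig *m d) = 0%R by nra.
have e2 : sqnorm Bd = 0%R by nra.
apply/eqP; rewrite -subr_eq0; apply/negPn/negP => dn0.
have := pd d dn0; rewrite mulmxDl ipDr e1 add0r -mulmxA -ip_mul.
by rewrite (_ : B *m d = Bd) ?mulmxBr // -/(sqnorm Bd) e2 ltxx.
Qed.
End ConvexAnalysis.

Lemma fix_PR_certificate {R : realType} {n : nat} (g1 g2 : 'cV[R]_n -> \bar R)
  (c : 'cV[R]_n) (sig : R) eta w : 0 < sig ->
  fix_PR (fun z => [set u + c | u in subdiff g1 z]) (subdiff g2) sig eta ->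
  is_resolvent (subdiff g2) sig eta w ->
  exists u1 u2, [/\ subdiff g1 w u1, subdiff g2 w u2,
                    eta = w + sig *: u2 & u1 = - u2 - c].
Proof.
move=> sig0 [w2 [w1 [Jw2 [[_ [u1 g1u1 <-] Jw1] refl]]]] Jw.
have ew2 : w2 = w := resolvent_uniq sig0 Jw2 Jw; subst w2.
have ew1 : w1 = w.
  by apply/matrixP => i j; move/matrixP: refl => /(_ i j); rewrite !mxE; lra.
subst w1; have [u2 g2u2 eeta] := Jw.
exists u1, u2; split => //.
apply/matrixP => i j; move/matrixP: Jw1 => /(_ i j); move/matrixP: eeta => /(_ i j).
rewrite !mxE => e2 e1; apply: (mulfI (lt0r_neq0 sig0)); nra.
Qed.

Lemma Lsig_s {R : realType} {nx ny nz : nat} (f1 : 'cV[R]_ny -> \bar R)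
  (f2 : 'cV[R]_nz -> \bar R) B1 B2 (c : 'cV[R]_nx) (sig : R) y s x :
  Lsig f1 f2 B1 B2 c sig y s x = (f1 y + prox_obj f2 B2 x (B1 *m y - c) sig s)%E.
Proof. by rewrite /Lsig /prox_obj addeA [B1 *m y + _]addrC addrA. Qed.

Lemma Lsig_y {R : realType} {nx ny nz : nat} (f1 : 'cV[R]_ny -> \bar R)
  (f2 : 'cV[R]_nz -> \bar R) B1 B2 (c : 'cV[R]_nx) (sig : R) y s x :
  Lsig f1 f2 B1 B2 c sig y s x = (f2 s + prox_obj f1 B1 x (B2 *m s - c) sig y)%E.
Proof. by rewrite /Lsig /prox_obj addeA [(f1 y + _)%E]addeC addrA. Qed.

Lemma prox_obj0 {R : realType} {m k : nat} (f : 'cV[R]_m -> \bar R)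
  (M : 'M[R]_(k, m)) p sig z :
  prox_obj f M p 0 sig z =
  (f z + (ip p (M *m z) + sig / 2 * sqnorm (M *m z))%:E)%E.
Proof. by rewrite /prox_obj addr0. Qed.

(* Algorithms A and B generate the same primal iterates; along the way
   eta^k = xh^k + sig (B1 y^k - c), and the optimality conditions of the
   subproblems read -B2^T w^{k+1} in df2(s^{k+1}), -B1^T x^{k+1} in
   df1(y^{k+1}). *)
Section Synchronisation.
Context {R : realType} {nx ny nz : nat}
  (f1 : 'cV[R]_ny -> \bar R) (f2 : 'cV[R]_nz -> \bar R)
  (B1 : 'M[R]_(nx, ny)) (B2 : 'M[R]_(nx, nz)) (c : 'cV[R]_nx)
  (Sig1 : 'M[R]_ny) (Sig2 : 'M[R]_nz)
  (Hf1 : proper_closed_convex f1) (Hf2 : proper_closed_convex f2)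
  (HS1 : is_sigma_mod f1 Sig1) (HS2 : is_sigma_mod f2 Sig2)
  (HA2 : Assumption2 B1 B2 Sig1 Sig2)
  (y0 : 'cV[R]_ny) (x0 : 'cV[R]_nx) (sigma : R)
  (Hy0 : dom f1 y0) (Hsigma : 0 < sigma)
  (y : nat -> 'cV[R]_ny) (s : nat -> 'cV[R]_nz)
  (xB xh xhalf : nat -> 'cV[R]_nx)
  (HB : AlgorithmB f1 f2 B1 B2 c y0 x0 sigma y s xB xh xhalf)
  (sA : nat -> 'cV[R]_nz) (yA : nat -> 'cV[R]_ny)
  (w x v eta : nat -> 'cV[R]_nx)
  (HA : AlgorithmA f1 f2 B1 B2 c y0 x0 sigma sA yA w x v eta).

Definition synced k :=
  eta k = xh k + sigma *: (B1 *m y k - c) /\ f1 (y k) \is a fin_num.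

Lemma synced0 : synced 0.
Proof.
have [ey0 [_ [exh0 _]]] := HB; have [_ [_ [eeta0 _]]] := HA.
split; first by rewrite eeta0 exh0 ey0.
have [[hinf _] _] := Hf1; rewrite ey0 fin_numE -ltNye hinf /=.
by move: Hy0; rewrite /dom /=; case: (f1 y0).
Qed.

(* The s-subproblems of A and B coincide up to a constant, and their
   solution is unique. *)
Lemma s_update k : synced k ->
  sA k.+1 = s k.+1 /\ subdiff f2 (s k.+1) (- (B2^T *m w k.+1)).
Proof.
move=> [etak fyk]; have [[pf2 [cf2 _]] [_ [_ [_ HBk]]]] := (Hf2, HB).
have [_ [_ [_ HAk]]] := HA.
have [Bs _] := HBk k; have [As [Aw _]] := HAk k.
have gB : subdiff f2 (s k.+1)
    (- (B2^T *m (xh k + sigma *: (B2 *m s k.+1 + (B1 *m y k - c))))).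
  apply: prox_optimality => //; apply: (argmin_drop_const fyk) => z.
  by have := Bs z; rewrite /= !Lsig_s.
have gA : subdiff f2 (sA k.+1)
    (- (B2^T *m (eta k + sigma *: (B2 *m sA k.+1 + 0)))).
  by apply: prox_optimality => // z; rewrite !prox_obj0; exact: As.
have gB' : subdiff f2 (s k.+1)
    (- (B2^T *m (eta k + sigma *: (B2 *m s k.+1 + 0)))).
  suff -> : eta k + sigma *: (B2 *m s k.+1 + 0) =
     xh k + sigma *: (B2 *m s k.+1 + (B1 *m y k - c)) by [].
  by rewrite etak; apply/matrixP => i j; rewrite !mxE; ring.
have esA := subdiff_inclusion_uniq HS2 HA2.2 Hsigma gA gB'.
by split => //; rewrite Aw esA -[B2 *m s k.+1]addr0.
Qed.

(* Likewise for the y-subproblems, once the s-iterates agree. *)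
Lemma y_update k : synced k ->
  yA k.+1 = y k.+1 /\ subdiff f1 (y k.+1) (- (B1^T *m x k.+1)).
Proof.
move=> sk; have [esA [fs _]] := s_update sk; have [etak _] := sk.
have [[pf1 [cf1 _]] [_ [_ [_ HBk]]]] := (Hf1, HB); have [_ [_ [_ HAk]]] := HA.
have [_ [Bhalf [By _]]] := HBk k; have [_ [_ [Ay [Ax _]]]] := HAk k.
rewrite esA in Ay Ax.
have gB : subdiff f1 (y k.+1)
    (- (B1^T *m (xhalf k + sigma *: (B1 *m y k.+1 + (B2 *m s k.+1 - c))))).
  apply: prox_optimality => //; apply: (argmin_drop_const fs) => z.
  by have := By z; rewrite /= !Lsig_y.
have gA := prox_optimality pf1 cf1 Hsigma Ay.
have gB' : subdiff f1 (y k.+1) (- (B1^T *m ((eta k + (2 * sigma) *: (B2 *m s k.+1))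
     + sigma *: (B1 *m y k.+1 - c)))).
  suff -> : (eta k + (2 * sigma) *: (B2 *m s k.+1)) + sigma *: (B1 *m y k.+1 - c) =
     xhalf k + sigma *: (B1 *m y k.+1 + (B2 *m s k.+1 - c)) by [].
  by rewrite Bhalf etak; apply/matrixP => i j; rewrite !mxE; ring.
have eyA := subdiff_inclusion_uniq HS1 HA2.1 Hsigma gA gB'.
split => //; suff -> : x k.+1 =
  (eta k + (2 * sigma) *: (B2 *m s k.+1)) + sigma *: (B1 *m y k.+1 - c) by [].
by rewrite Ax eyA; apply/matrixP => i j; rewrite !mxE; ring.
Qed.

Lemma synced_step k : synced k -> synced k.+1.
Proof.
move=> sk; have [esA _] := s_update sk; have [eyA [fy _]] := y_update sk.
split => //; have [etak _] := sk.
have [_ [_ [exh0 HBk]]] := HB; have [_ [_ [eeta0 HAk]]] := HA.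
have [_ [Bhalf [_ [BxB Bxh]]]] := HBk k.
have [_ [_ [_ [_ [Av Aeta]]]]] := HAk k.
rewrite Aeta Bxh BxB Bhalf Av etak eeta0 exh0 esA eyA -natr1.
have k0 : (k.+1%:R + 1 : R) != 0 by rewrite natr1 pnatr_eq0.
by apply/matrixP => i j; rewrite !mxE; field.
Qed.

Lemma synced_all k : synced k.
Proof. by elim: k => [|k /synced_step]; first exact: synced0. Qed.

Lemma iteration k :
  [/\ w k.+1 = eta k + sigma *: (B2 *m s k.+1),
      x k.+1 = eta k + sigma *: (B1 *m y k.+1 - c) + (2 * sigma) *: (B2 *m s k.+1),
      v k.+1 = eta k + (2 * sigma) *: (B1 *m y k.+1 + B2 *m s k.+1 - c),
      subdiff f2 (s k.+1) (- (B2^T *m w k.+1)) &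
      subdiff f1 (y k.+1) (- (B1^T *m x k.+1))].
Proof.
have [esA g2] := s_update (synced_all k); have [eyA g1] := y_update (synced_all k).
have [_ [_ [_ HAk]]] := HA; have [_ [Aw [_ [Ax [Av _]]]]] := HAk k.
by rewrite esA eyA in Aw Ax Av.
Qed.
End Synchronisation.

Section Identities.
Context {R : realType} {n : nat}.
Implicit Types p q r : 'cV[R]_n.

Lemma sqnorm_polar p q : sqnorm (p - q) + 2 * ip (p - q) q = sqnorm p - sqnorm q.
Proof. rewrite sqnormB ipBl -/(sqnorm q); lra. Qed.

Lemma sqnorm_shift p r (t : R) :
  sqnorm p - sqnorm (p + (2 * t) *: r) = - (4 * t) * (ip p r + t * sqnorm r).
Proof. rewrite sqnormD sqnormZ ipZr; ring. Qed.

Lemma multiplier_pairing (eta Y S c : 'cV[R]_n) (sig : R) :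
  ip (eta + sig *: (Y - c) + (2 * sig) *: S) (Y - c) + ip (eta + sig *: S) S
  = ip eta (Y + S - c) + sig * sqnorm (Y + S - c).
Proof.
rewrite /sqnorm /ip mulr_sumr -!big_split /=; apply: eq_bigr => i _.
by rewrite !mxE; ring.
Qed.

Lemma dual_pairing (eta Y S c u2 ws : 'cV[R]_n) (sig : R) :
  - ip (- u2 - c) ((eta + sig *: (Y - c) + (2 * sig) *: S) - ws)
  - ip u2 ((eta + sig *: S) - ws)
  - ip (eta + sig *: (Y - c) + (2 * sig) *: S) Y - ip (eta + sig *: S) S
  = - ip ws c + ip (sig *: u2 - eta) (Y + S - c) - sig * sqnorm (Y + S - c).
Proof.
rewrite /sqnorm /ip -!sumrN !mulr_sumr -!sumrN -!big_split /=.
by apply: eq_bigr => i _; rewrite !mxE; ring.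
Qed.
End Identities.

Lemma fconj_at_subgrad {R : realType} {m k : nat} (f : 'cV[R]_m -> \bar R)
  (B : 'M[R]_(k, m)) (u : 'cV[R]_k) z F :
  subdiff f z (- (B^T *m u)) -> f z = F%:E ->
  fconj f (- (B^T *m u)) = (- ip u (B *m z) - F)%:E.
Proof. by move=> g eF; rewrite (fconj_subdiff g) eF -EFinB ipNl ip_mul trmxK. Qed.

Lemma fconj_lb_at {R : realType} {m k : nat} (f : 'cV[R]_m -> \bar R)
  (B : 'M[R]_(k, m)) (u : 'cV[R]_k) z F C :
  f z = F%:E -> fconj f (- (B^T *m u)) = C%:E -> - C - ip u (B *m z) <= F.
Proof.
move=> eF eC; have := fconj_lb f (- (B^T *m u)) z.
by rewrite eC eF -EFinB lee_fin ipNl ip_mul trmxK; lra.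
Qed.

Section Estimates.
Context {R : realType} {nx ny nz : nat}
  (f1 : 'cV[R]_ny -> \bar R) (f2 : 'cV[R]_nz -> \bar R)
  (B1 : 'M[R]_(nx, ny)) (B2 : 'M[R]_(nx, nz)) (c : 'cV[R]_nx)
  (Sig1 : 'M[R]_ny) (Sig2 : 'M[R]_nz)
  (Hf1 : proper_closed_convex f1) (Hf2 : proper_closed_convex f2)
  (HS1 : is_sigma_mod f1 Sig1) (HS2 : is_sigma_mod f2 Sig2)
  (HA2 : Assumption2 B1 B2 Sig1 Sig2)
  (y0 : 'cV[R]_ny) (x0 : 'cV[R]_nx) (sigma : R)
  (Hy0 : dom f1 y0) (Hsigma : 0 < sigma)
  (y : nat -> 'cV[R]_ny) (s : nat -> 'cV[R]_nz)
  (xB xh xhalf : nat -> 'cV[R]_nx)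
  (HB : AlgorithmB f1 f2 B1 B2 c y0 x0 sigma y s xB xh xhalf)
  (sA : nat -> 'cV[R]_nz) (yA : nat -> 'cV[R]_ny)
  (w x v eta : nat -> 'cV[R]_nx)
  (HA : AlgorithmA f1 f2 B1 B2 c y0 x0 sigma sA yA w x v eta)
  (etastar wstar u1 u2 : 'cV[R]_nx)
  (Hu1 : subdiff (conjB1 f1 B1) wstar u1) (Hu2 : subdiff (conjB2 f2 B2) wstar u2)
  (Heta : etastar = wstar + sigma *: u2) (Hu : u1 = - u2 - c).

Local Notation step := (iteration Hf1 Hf2 HS1 HS2 HA2 Hy0 Hsigma HB HA).
Local Notation r k := (B1 *m y k + B2 *m s k - c).

(* One Peaceman-Rachford step eta^k |-> v^{k+1} is nonexpansive towards the
   fixed point: it composes two reflections through monotone operators. *)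
Lemma pr_step_nonexpansive k :
  sqnorm (v k.+1 - etastar) <= sqnorm (eta k - etastar).
Proof.
have [Ew Ex Ev g2 g1] := step k.
have m2 := subdiff_mono (subdiff_conj_comp g2) Hu2.
have m1 : 0 <= ip ((- (B1 *m y k.+1) + c) - (u1 + c)) (x k.+1 - wstar).
  have -> : (- (B1 *m y k.+1) + c) - (u1 + c) = - (B1 *m y k.+1) - u1.
    by apply/matrixP => i j; rewrite !mxE; ring.
  exact: subdiff_mono (subdiff_conj_comp g1) Hu1.
have -> : v k.+1 - etastar = (x k.+1 - sigma *: (- (B1 *m y k.+1) + c))
     - (wstar - sigma *: (u1 + c)).
  by rewrite Ev Ex Heta Hu; apply/matrixP => i j; rewrite !mxE; ring.
apply: le_trans (reflection_nonexpansive Hsigma m1) _.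
have -> : (x k.+1 + sigma *: (- (B1 *m y k.+1) + c)) - (wstar + sigma *: (u1 + c))
   = (w k.+1 - sigma *: (- (B2 *m s k.+1))) - (wstar - sigma *: u2).
  by rewrite Ex Ew Hu; apply/matrixP => i j; rewrite !mxE; ring.
apply: le_trans (reflection_nonexpansive Hsigma m2) _.
suff -> : (w k.+1 + sigma *: (- (B2 *m s k.+1))) - (wstar + sigma *: u2) =
          eta k - etastar by [].
by rewrite Ew Heta; apply/matrixP => i j; rewrite !mxE; ring.
Qed.

Lemma halpern_bounded k : sqnorm (eta k - etastar) <= sqnorm (eta 0 - etastar).
Proof.
elim: k => [//|k IHk].
have [_ [_ [_ HAk]]] := HA; have [_ [_ [_ [_ [_ Aeta]]]]] := HAk k.
set L := (k.+2%:R : R)^-1.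
have -> : eta k.+1 - etastar = L *: (eta 0 - etastar) + (1 - L) *: (v k.+1 - etastar).
  rewrite Aeta /L -natr1; have k0 : (k.+1%:R + 1 : R) != 0 by rewrite natr1 pnatr_eq0.
  by apply/matrixP => i j; rewrite !mxE; field.
have L01 : 0 <= L <= 1 by rewrite invr_ge0 ler0n /= invf_le1 ?ltr0Sn // ler1n.
apply: le_trans (sqnorm_convex _ _ L01) _; case/andP: L01 => L0 L1.
have : (1 - L) * sqnorm (v k.+1 - etastar) <= (1 - L) * sqnorm (eta 0 - etastar).
  by rewrite ler_wpM2l ?subr_ge0 // (le_trans (pr_step_nonexpansive k)).
lra.
Qed.

Lemma halpern_scaled k :
  k.+2%:R *: eta k.+1 = eta 0 + k.+1%:R *: eta k + (2 * sigma * k.+1%:R) *: r k.+1.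
Proof.
have [_ _ Ev _ _] := step k.
have [_ [_ [_ HAk]]] := HA; have [_ [_ [_ [_ [_ Aeta]]]]] := HAk k.
rewrite Aeta Ev -natr1; have k0 : (k.+1%:R + 1 : R) != 0 by rewrite natr1 pnatr_eq0.
by apply/matrixP => i j; rewrite !mxE; field.
Qed.

Let C1 := fine (conjB1 f1 B1 wstar).
Let C2 := fine (conjB2 f2 B2 wstar).
Let dstar := C1 + ip wstar c + C2.

Lemma conjB1_wstar : conjB1 f1 B1 wstar = C1%:E.
Proof. by rewrite /C1 fineK //; case: Hu1. Qed.

Lemma conjB2_wstar : conjB2 f2 B2 wstar = C2%:E.
Proof. by rewrite /C2 fineK //; case: Hu2. Qed.

Lemma primal_lower (y' : 'cV[R]_ny) (s' : 'cV[R]_nz) F1 F2 :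
  f1 y' = F1%:E -> f2 s' = F2%:E ->
  - dstar - ip wstar (B1 *m y' + B2 *m s' - c) <= F1 + F2.
Proof.
move=> e1 e2; have := fconj_lb_at e1 conjB1_wstar.
have := fconj_lb_at e2 conjB2_wstar; rewrite /dstar ipBr ipDr; lra.
Qed.

Lemma iterate_values k : exists F1 F2,
  [/\ f1 (y k.+1) = F1%:E, f2 (s k.+1) = F2%:E,
      conjB1 f1 B1 (x k.+1) = (- ip (x k.+1) (B1 *m y k.+1) - F1)%:E &
      conjB2 f2 B2 (w k.+1) = (- ip (w k.+1) (B2 *m s k.+1) - F2)%:E].
Proof.
have [_ _ _ g2 g1] := step k.
have [[/EFin_fin_numP[F1 e1] _] [/EFin_fin_numP[F2 e2] _]] := (g1, g2).
by exists F1, F2; split => //; apply: fconj_at_subgrad.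
Qed.

(* Per-iterate upper bound on the primal objective, from the subgradient
   inequalities of the dual functions at wstar. *)
Lemma primal_upper k F1 F2 : f1 (y k.+1) = F1%:E -> f2 (s k.+1) = F2%:E ->
  F1 + F2 <= - dstar + ip (sigma *: u2 - eta k) (r k.+1) - sigma * sqnorm (r k.+1).
Proof.
move=> e1 e2; have [Ew Ex _ g2 g1] := step k.
have := Hu1.2 (x k.+1); rewrite conjB1_wstar /conjB1 (fconj_at_subgrad g1 e1).
rewrite -EFinD lee_fin.
have := Hu2.2 (w k.+1); rewrite conjB2_wstar /conjB2 (fconj_at_subgrad g2 e2).
rewrite -EFinD lee_fin.
have := dual_pairing (eta k) (B1 *m y k.+1) (B2 *m s k.+1) c u2 wstar sigma.
rewrite -Ex -Ew -Hu /dstar; lra.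
Qed.

Context (ystar : 'cV[R]_ny) (sstar : 'cV[R]_nz)
  (Hylim : cvg_vec y ystar) (Hslim : cvg_vec s sstar).

Local Notation rstar := (B1 *m ystar + B2 *m sstar - c).

Lemma resid_cvg d : 0 < d ->
  exists N, forall k, (N <= k)%N -> sqnorm (r k - rstar) < d.
Proof.
move=> d0; have d40 : 0 < d / 4 by rewrite divr_gt0.
have [N1 H1] := cvg_vec_mul B1 Hylim d40; have [N2 H2] := cvg_vec_mul B2 Hslim d40.
exists (maxn N1 N2) => k; rewrite geq_max => /andP[k1 k2].
have -> : r k - rstar = B1 *m (y k - ystar) + B2 *m (s k - sstar).
  by rewrite !mulmxBr; apply/matrixP => i j; rewrite !mxE; ring.
apply: le_lt_trans (sqnormD2 _ _) _; have := H1 k k1; have := H2 k k2; lra.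
Qed.

(* The limit point is primal feasible: if rstar <> 0, the Halpern recursion
   would make (k+1) <eta^k, rstar> grow quadratically, while the iterates
   stay bounded. *)
Lemma limit_feasible : rstar = 0.
Proof.
apply/eqP; apply/negPn/negP => rs0.
have q0 : 0 < sqnorm rstar.
  by rewrite lt_def sqnorm_ge0 andbT; apply: contra rs0 => /eqP/sqnorm_eq0 ->.
have [N1 HN1] := resid_cvg (divr_gt0 q0 (ltr0Sn _ 3)).
pose E := 2 * sqnorm (eta 0 - etastar) + 2 * sqnorm etastar.
have eta_bd k : `|ip (eta k) rstar| <= E + sqnorm rstar.
  apply: ip_abs_le => //; rewrite -(subrK etastar (eta k)).
  by apply: le_trans (sqnormD2 _ _) _; have := halpern_bounded k; rewrite /E; lra.
apply: (@no_quadratic_escape _ (fun k => k.+1%:R * ip (eta k) rstar)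
  (sigma * sqnorm rstar) (E + sqnorm rstar) N1); first by rewrite mulr_gt0.
  by move=> k; rewrite normrM ger0_norm // ler_wpM2l.
move=> k Nk /=; rewrite -[k.+2%:R * _]ipZl halpern_scaled !ipDl !ipZl.
have := ip_ge_half (ltW (HN1 k.+1 (leqW Nk))); have := eta_bd 0%N.
rewrite ler_norml => /andP[lb _] half.
have : sigma * k.+1%:R * sqnorm rstar <= 2 * sigma * k.+1%:R * ip (r k.+1) rstar.
  have : 0 <= sigma * k.+1%:R by rewrite mulr_ge0 // ltW.
  nra.
lra.
Qed.

Lemma primal_gap_small d : 0 < d -> exists N, forall k, (N <= k)%N ->
  ip (sigma *: u2 - eta k) (r k.+1) - sigma * sqnorm (r k.+1) < d.
Proof.
move=> d0.
pose K := 2 * sqnorm (sigma *: u2 - etastar) + 2 * sqnorm (eta 0 - etastar).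
have K0 : 0 <= K.
  have := sqnorm_ge0 (sigma *: u2 - etastar); have := sqnorm_ge0 (eta 0 - etastar).
  rewrite /K; lra.
have eta_bd k : sqnorm (sigma *: u2 - eta k) <= K.
  have -> : sigma *: u2 - eta k = (sigma *: u2 - etastar) + - (eta k - etastar).
    by apply/matrixP => i j; rewrite !mxE; ring.
  apply: le_trans (sqnormD2 _ _) _; have := halpern_bounded k; rewrite sqnormN /K; lra.
have dK : 0 < d * d / (K + 1) by rewrite divr_gt0 ?mulr_gt0 //; lra.
have [N HN] := resid_cvg dK; exists N => k Nk.
have := HN k.+1 (leqW Nk); rewrite limit_feasible subr0 => small.
have := ip_lt_small K0 d0 (eta_bd k) small.
have := mulr_ge0 (ltW Hsigma) (sqnorm_ge0 (r k.+1)); lra.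
Qed.

Lemma optimal_value : exists P1 P2,
  [/\ f1 ystar = P1%:E, f2 sstar = P2%:E & P1 + P2 = - dstar].
Proof.
have [[[hinf1 _] [_ lsc1]] [[hinf2 _] [_ lsc2]]] := (Hf1, Hf2).
have up : (f1 ystar + f2 sstar <= (- dstar)%:E)%E.
  apply: lsc_sum_limit lsc1 lsc2 hinf1 hinf2 Hylim Hslim _ => d d0.
  have [N HN] := primal_gap_small d0; exists N.+1 => -[//|k] Nk.
  have [F1 [F2 [e1 e2 _ _]]] := iterate_values k.
  rewrite e1 e2 -EFinD lee_fin; have := primal_upper e1 e2; have := HN k Nk; lra.
have [P1 e1] : exists P1, f1 ystar = P1%:E.
  move: up (hinf1 ystar) (hinf2 sstar).
  by case: (f1 ystar) => [p _ _ _| |//]; [exists p | case: (f2 sstar)].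
have [P2 e2] : exists P2, f2 sstar = P2%:E.
  by move: up (hinf2 sstar); rewrite e1; case: (f2 sstar) => [p||] //; exists p.
exists P1, P2; split => //; move: up; rewrite e1 e2 -EFinD lee_fin => up.
have := primal_lower e1 e2; rewrite limit_feasible ip0r; lra.
Qed.

Lemma estimates k :
    ((4%:R * sigma)%:E * hfun f1 f2 ystar sstar (y k.+1) (s k.+1) =
       - ((4%:R * sigma)%:E *
          (d_f1 f1 B1 c (x k.+1) + d_f2 f2 B2 (w k.+1)
           - d_f1 f1 B1 c wstar - d_f2 f2 B2 wstar))
       + (sqnorm (eta k - v k.+1) + 2%:R * ip (eta k - v k.+1) (v k.+1))%:E)%E
    /\
    ((4%:R * sigma)%:E * hfun f1 f2 ystar sstar (y k.+1) (s k.+1) <=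
       (sqnorm (eta k - (etastar - wstar))
        - sqnorm (v k.+1 - (etastar - wstar)))%:E)%E
    /\
    ((ip (B1 *m y k.+1 + B2 *m s k.+1 - c) (- wstar))%:E <=
       hfun f1 f2 ystar sstar (y k.+1) (s k.+1))%E.
Proof.
have [P1 [P2 [eP1 eP2 opt]]] := optimal_value.
have [F1 [F2 [eF1 eF2 ex ew]]] := iterate_values k.
have [Ew Ex Ev _ _] := step k.
rewrite /hfun /d_f1 /d_f2 eF1 eF2 eP1 eP2 ex ew conjB1_wstar conjB2_wstar.
do 4 rewrite -?EFinD -?EFinB -?EFinM -?EFinN.
have upper := primal_upper eF1 eF2; have lower := primal_lower eF1 eF2.
split; [|split]; rewrite ?lee_fin.
- congr EFin.
  have := sqnorm_polar (eta k) (v k.+1).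
  have := sqnorm_shift (eta k) (r k.+1) sigma; rewrite -Ev.
  have := multiplier_pairing (eta k) (B1 *m y k.+1) (B2 *m s k.+1) c sigma.
  rewrite -Ex -Ew ipBr /dstar in opt *; nra.
- have -> : etastar - wstar = sigma *: u2 by rewrite Heta addrAC subrr add0r.
  have := sqnorm_shift (eta k - sigma *: u2) (r k.+1) sigma.
  have -> : eta k - sigma *: u2 + (2 * sigma) *: r k.+1 = v k.+1 - sigma *: u2.
    by rewrite Ev addrAC.
  have e : ip (sigma *: u2 - eta k) (r k.+1) = - ip (eta k - sigma *: u2) (r k.+1).
    by rewrite !ipBl; lra.
  move=> ->; rewrite e in upper.
  have -> : F1 + F2 - P1 - P2 = F1 + F2 + dstar by lra.
  set I := ip _ _ in upper *; set S := sqnorm (r k.+1) in upper *.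
  have -> : - (4 * sigma) * (I + sigma * S) = 4 * sigma * (- I - sigma * S) by ring.
  by rewrite ler_pM2l ?mulr_gt0 //; lra.
- rewrite ipNr ipC; lra.
Qed.
End Estimates.

Theorem lemma3p5 (R : realType) (nx ny nz : nat)
  (f1 : 'cV[R]_ny -> \bar R) (f2 : 'cV[R]_nz -> \bar R)
  (B1 : 'M[R]_(nx, ny)) (B2 : 'M[R]_(nx, nz)) (c : 'cV[R]_nx)
  (Sig1 : 'M[R]_ny) (Sig2 : 'M[R]_nz)
  (Hf1 : proper_closed_convex f1) (Hf2 : proper_closed_convex f2)
  (HS1 : is_sigma_mod f1 Sig1) (HS2 : is_sigma_mod f2 Sig2)
  (HA1 : Assumption1 f1 f2 B1 B2 c) (HA2 : Assumption2 B1 B2 Sig1 Sig2)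
  (y0 : 'cV[R]_ny) (x0 : 'cV[R]_nx) (sigma : R)
  (Hy0 : dom f1 y0) (Hsigma : 0 < sigma)
  (* Algorithm B *)
  (y : nat -> 'cV[R]_ny) (s : nat -> 'cV[R]_nz)
  (xB xh xhalf : nat -> 'cV[R]_nx)
  (HB : AlgorithmB f1 f2 B1 B2 c y0 x0 sigma y s xB xh xhalf)
  (ystar : 'cV[R]_ny) (sstar : 'cV[R]_nz)
  (Hylim : cvg_vec y ystar) (Hslim : cvg_vec s sstar)
  (* Algorithm A *)
  (sA : nat -> 'cV[R]_nz) (yA : nat -> 'cV[R]_ny)
  (w x v eta : nat -> 'cV[R]_nx)
  (HA : AlgorithmA f1 f2 B1 B2 c y0 x0 sigma sA yA w x v eta)
  (* eta* = Pi_{Fix(T^PR_sigma)}(eta^0),  w* = J_{sigma M2}(eta* ) *)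
  (etastar wstar : 'cV[R]_nx)
  (Hetastar : is_proj (fix_PR (M1op f1 B1 c) (M2op f2 B2) sigma)
                (eta 0%N) etastar)
  (Hwstar : is_resolvent (M2op f2 B2) sigma etastar wstar) :
  forall k : nat,
    ((4%:R * sigma)%:E * hfun f1 f2 ystar sstar (y k.+1) (s k.+1) =
       - ((4%:R * sigma)%:E *
          (d_f1 f1 B1 c (x k.+1) + d_f2 f2 B2 (w k.+1)
           - d_f1 f1 B1 c wstar - d_f2 f2 B2 wstar))
       + (sqnorm (eta k - v k.+1) + 2%:R * ip (eta k - v k.+1) (v k.+1))%:E)%E
    /\
    ((4%:R * sigma)%:E * hfun f1 f2 ystar sstar (y k.+1) (s k.+1) <=
       (sqnorm (eta k - (etastar - wstar))
        - sqnorm (v k.+1 - (etastar - wstar)))%:E)%E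
    /\
    ((ip (B1 *m y k.+1 + B2 *m s k.+1 - c) (- wstar))%:E <=
       hfun f1 f2 ystar sstar (y k.+1) (s k.+1))%E.
Proof.
have [u1 [u2 [Hu1 Hu2 Heta Hu]]] := fix_PR_certificate Hsigma Hetastar.1 Hwstar.
move=> k.
exact: (estimates Hf1 Hf2 HS1 HS2 HA2 Hy0 Hsigma HB HA Hu1 Hu2 Heta Hu Hylim Hslim k).
Qed.
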